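(* Let $A\in\mathcal A$ and $\Gamma(A)=\{\gamma\in\Gamma: g^*(e_1+\varepsilon\gamma)=A(e_1+\varepsilon\gamma)\text{ for all small }\varepsilon>0\}$. Suppose $\mathcal G^{(r+1)}$ is connected, and for edges $j,k\in\mathcal E^{(r+1)}$ the matrix $Q^{(r+1)}(A-I)$ is skew-symmetric, i.e. $\big(Q^{(r+1)}(A-I)\big)^T=-Q^{(r+1)}(A-I)$. Then $\psi^{(r+1)}_j(d)=\psi^{(r+1)}_k(d)$ with $d=e_1+\varepsilon\gamma$ for all $\gamma\in\Gamma(A)$ and all $\varepsilon\ge0$ sufficiently small.
   Context: $\mathcal G$ is a simple connected oriented graph with nodes $\{1,\dots,n\}$, $m$ edges, incidence matrix $C$, PTDF matrix $V=C(C^TC)^+$; $e$ all-ones, $J=ee^T$; $\lambda\in(0,1)$, $\lambda^*\ge\lambda$. $\Gamma=\{\gamma\in\mathbb R^n:\gamma_1=0,\gamma\ge0,e^T\gamma=1\}$. $g^*(d)$ is the DC-OPF optimal generation (unique minimizer of $\frac12\sum g_i^2$ over $g\ge0$ with $e^Tg=e^Td$, $-\lambda|Vd|\le V(d-g)\le\lambda|Vd|$). $\mathcal A=\{A_I:I\subseteq\{0,\dots,2m\}\}$ where, with $I_1=I\cap\{1,\dots,m\}$, $I_2=I\cap\{m+1,\dots,2m\}$, $V_{I_1}$ the rows $j\in I_1$ of $V$ and $V_{I_2}$ the rows $k-m$, $k\in I_2$: $A_I=\frac1nJ+[V_{I_1}^T\ V_{I_2}^T]\big([V_{I_1};V_{I_2}][V_{I_1}^T\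 V_{I_2}^T]\big)^+[(1-\lambda)V_{I_1};(1+\lambda)V_{I_2}]$. In the cascade, after $r$ edge failures the graph is $\mathcal G^{(r+1)}$ with surviving edges $\mathcal E^{(r+1)}$ and PTDF matrix $V^{(r+1)}$; if it is connected then $d^{(r+1)}=d$, $g^{(r+1)}=g^*(d)$; flows $f^{(r+1)}=V^{(r+1)}(d-g^*(d))$, emergency limits $F=\lambda^*Vd$, relative exceedances $\psi^{(r+1)}_i=|f^{(r+1)}_i|/F_i$. With $v_l=e_l^TV$, $v_l^{(r+1)}=e_l^TV^{(r+1)}$: $Q^{(r+1)}=v_j^Tv_k^{(r+1)}-v_k^Tv_j^{(r+1)}$ if $f^{(r+1)}_kf^{(r+1)}_j\ge0$ and $Q^{(r+1)}=v_j^Tv_k^{(r+1)}+v_k^Tv_j^{(r+1)}$ otherwise. *)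

From HB Require Import structures.
From mathcomp Require Import all_boot all_order all_algebra.
From mathcomp Require Import boolp reals.
Set Implicit Arguments. Unset Strict Implicit. Unset Printing Implicit Defensive.
Import Order.TTheory GRing.Theory Num.Theory.
Local Open Scope ring_scope.

Section PowerGrid.
Variable R : realType.

Definition is_pinv p q (M : 'M[R]_(p, q)) (X : 'M[R]_(q, p)) : Prop :=
  [/\ M *m X *m M = M, X *m M *m X = X,
      (M *m X)^T = M *m X & (X *m M)^T = X *m M].

Definition pinv p q (M : 'M[R]_(p, q)) : 'M[R]_(q, p) :=
  match pselect (exists X, is_pinv M X) with
  | left H => projT1 (cid H)
  | right _ => 0
  end.

Variables (n m : nat) (src dst : 'I_m -> 'I_n).

Definition simple_graph : Prop :=
  (forall e, src e != dst e) /\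
  (forall e e', e != e' ->
     ~ ((src e = src e' /\ dst e = dst e') \/ (src e = dst e' /\ dst e = src e'))).

Definition adj (E : {set 'I_m}) : rel 'I_n :=
  fun x y => [exists e in E, ((src e == x) && (dst e == y)) || ((src e == y) && (dst e == x))].

Definition connected_on (E : {set 'I_m}) : Prop := forall x y, connect (adj E) x y.

Definition incidence : 'M[R]_(m, n) :=
  \matrix_(e, i) ((i == src e)%:R - (i == dst e)%:R).

Definition incidence_on (E : {set 'I_m}) : 'M[R]_(m, n) :=
  \matrix_(e, i) (if e \in E then incidence e i else 0).

Definition ptdf_of (C : 'M[R]_(m, n)) : 'M[R]_(m, n) := C *m pinv (C^T *m C).

Definition PTDF : 'M[R]_(m, n) := ptdf_of incidence.
Definition PTDF_on (E : {set 'I_m}) : 'M[R]_(m, n) := ptdf_of (incidence_on E).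

Definition sumv (x : 'cV[R]_n) : R := \sum_i x i 0.
Definition cost (g : 'cV[R]_n) : R := 2^-1 * \sum_i (g i 0) ^+ 2.

Definition opf_feasible (lam : R) (d g : 'cV[R]_n) : Prop :=
  (forall i, 0 <= g i 0) /\ sumv g = sumv d /\
  (forall e, - (lam * `|(PTDF *m d) e 0|) <= (PTDF *m (d - g)) e 0
             <= lam * `|(PTDF *m d) e 0|).

Definition opf_optimal (lam : R) (d g : 'cV[R]_n) : Prop :=
  opf_feasible lam d g /\ forall h, opf_feasible lam d h -> cost g <= cost h.

(* g^*(d): the (unique) minimizer, chosen classically (0 if none exists) *)
Definition gstar (lam : R) (d : 'cV[R]_n) : 'cV[R]_n :=
  match pselect (exists g, opf_optimal lam d g) with
  | left H => projT1 (cid H)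
  | right _ => 0
  end.

(* I1 = I ∩ {1..m}, I2 = {k - m : k ∈ I ∩ {m+1..2m}}, both as subsets of edges 'I_m *)
Definition subrows (I : {set 'I_m}) (M : 'M[R]_(m, n)) : 'M[R]_(#|I|, n) :=
  rowsub (fun i : 'I_#|I| => enum_val i) M.

Definition Amat (lam : R) (I1 I2 : {set 'I_m}) : 'M[R]_n :=
  let W := col_mx (subrows I1 PTDF) (subrows I2 PTDF) in
  let W' := col_mx ((1 - lam) *: subrows I1 PTDF) ((1 + lam) *: subrows I2 PTDF) in
  (n%:R)^-1 *: const_mx 1 + W^T *m pinv (W *m W^T) *m W'.

Definition unitv (i : 'I_n) : 'cV[R]_n := delta_mx i 0.

Definition in_Gamma (node1 : 'I_n) (gam : 'cV[R]_n) : Prop :=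
  gam node1 0 = 0 /\ (forall i, 0 <= gam i 0) /\ sumv gam = 1.

Definition in_GammaA (lam : R) (node1 : 'I_n) (A : 'M[R]_n) (gam : 'cV[R]_n) : Prop :=
  in_Gamma node1 gam /\
  exists eps0 : R, 0 < eps0 /\
    forall eps : R, 0 < eps < eps0 ->
      gstar lam (unitv node1 + eps *: gam) = A *m (unitv node1 + eps *: gam).

Definition flow (lam : R) (E' : {set 'I_m}) (d : 'cV[R]_n) : 'cV[R]_m :=
  PTDF_on E' *m (d - gstar lam d).

Definition limits (lamstar : R) (d : 'cV[R]_n) : 'cV[R]_m := lamstar *: (PTDF *m d).

Definition psi (lam lamstar : R) (E' : {set 'I_m}) (d : 'cV[R]_n) (i : 'I_m) : R :=
  `|flow lam E' d i 0| / limits lamstar d i 0.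

Definition Qmat (lam : R) (E' : {set 'I_m}) (d : 'cV[R]_n) (j k : 'I_m) : 'M[R]_n :=
  let vj := row j PTDF in let vk := row k PTDF in
  let vj' := row j (PTDF_on E') in let vk' := row k (PTDF_on E') in
  let f := flow lam E' d in
  if 0 <= f k 0 * f j 0 then vj^T *m vk' - vk^T *m vj'
  else vj^T *m vk' + vk^T *m vj'.

End PowerGrid.

From HB Require Import structures.
From mathcomp Require Import all_boot all_order all_algebra.
From mathcomp Require Import boolp reals.
From mathcomp Require classical_sets topology normedtype derive.
From mathcomp Require Import lra ring.

(* On the range of eps where g*(d) = A d, the OPF solution is affine in eps.  A
   minimiser exists (continuous cost on a compact polytope) and is unique (strict
   convexity), and optimality survives the limit eps -> 0: a point h feasible for
   e_1 yields the point h + eps (K (e_1 - h) + gam), feasible for e_1 + eps gam,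
   because every line limit scales with |V d|.  So g*(d) = A d also at eps = 0.
   With y = d - A d the post-contingency flows are f = V' y, and skew-symmetry of
   M = Q (A - I) gives d^T M d = 0.  As Q is a sum of two rank-one matrices this
   reads a_j f_k = +-a_k f_j with a = V d, the sign matching that of f_j f_k,
   which is exactly |f_j| / F_j = |f_k| / F_k. *)

Set Implicit Arguments.
Unset Strict Implicit.
Unset Printing Implicit Defensive.
Import Order.TTheory GRing.Theory Num.Theory.
Local Open Scope ring_scope.

Lemma le0_of_le_mul_small (R : realFieldType) (e0 u w : R) : 0 < e0 ->
  (forall eps, 0 < eps < e0 -> u <= eps * w) -> u <= 0.
Proof.
move=> e0_gt0 u_le; apply/ler_addgt0Pl => e e_gt0; rewrite addr0.
have w1_gt0 : 0 < `|w| + 1 by rewrite ltr_wpDl.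
pose t := Num.min (e0 / 2) (e / (`|w| + 1)).
have t_gt0 : 0 < t by rewrite lt_min !divr_gt0.
have t_lt_e0 : t < e0 by rewrite gt_min; apply/orP; left; lra.
have tw_le : t * (`|w| + 1) <= e by rewrite -ler_pdivlMr // ge_min lexx orbT.
apply: (le_trans (u_le t _)); first by rewrite t_gt0.
apply: le_trans tw_le; rewrite ler_pM2l //; have := ler_norm w; lra.
Qed.

Lemma exists_ratio_bound (R : realFieldType) (p : nat) (x y : 'cV[R]_p) :
  exists2 K, 0 <= K & forall e, x e 0 != 0 -> `|y e 0| <= K * `|x e 0|.
Proof.
exists (\sum_e `|y e 0| / `|x e 0|); first by rewrite sumr_ge0 // => e _; rewrite divr_ge0.
move=> e x_neq0; rewrite -ler_pdivrMr ?normr_gt0 //.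
by rewrite (bigD1 e) //= lerDl sumr_ge0 // => e' _; rewrite divr_ge0.
Qed.

Lemma normr_cross_eq (R : realFieldType) (x y a b : R) : a != 0 -> b != 0 ->
  (if 0 <= y * x then a * y = b * x else a * y = - (b * x)) ->
  `|x| * b = `|y| * a.
Proof.
move=> a_neq0 b_neq0.
have a2_gt0 : 0 < a * a by rewrite -expr2 exprn_even_gt0.
have b2_gt0 : 0 < b * b by rewrite -expr2 exprn_even_gt0.
case: ifP => [xy_ge0 | /negbT xy_lt0] eq; last rewrite -ltNge in xy_lt0.
  have [x_ge0 | x_lt0] := lerP 0 x; have [y_ge0 | y_lt0] := lerP 0 y;
    rewrite ?(ger0_norm x_ge0) ?(ltr0_norm x_lt0) ?(ger0_norm y_ge0) ?(ltr0_norm y_lt0);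
    nra.
have [x_ge0 | x_lt0] := lerP 0 x; have [y_ge0 | y_lt0] := lerP 0 y;
  rewrite ?(ger0_norm x_ge0) ?(ltr0_norm x_lt0) ?(ger0_norm y_ge0) ?(ltr0_norm y_lt0);
  nra.
Qed.

Lemma skew_quad_form0 (R : numDomainType) (p : nat) (M : 'M[R]_p) (x : 'cV[R]_p) :
  M^T = - M -> (x^T *m M *m x) 0 0 = 0.
Proof.
move=> M_skew.
have : (x^T *m M *m x)^T = - (x^T *m M *m x).
  by rewrite !trmx_mul trmxK M_skew mulNmx mulmxN mulmxA.
move/(congr1 (fun X : 'M_1 => X 0 0)); rewrite mxE [RHS]mxE => q_eq.
by apply/eqP; rewrite -[_ == 0](@mulrn_eq0 _ _ 2) mulr2n {2}q_eq subrr.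
Qed.

Lemma rank1_quad_form (R : comRingType) (p : nat) (u w : 'rV[R]_p) (x y : 'cV[R]_p) :
  (x^T *m (u^T *m w) *m y) 0 0 = (u *m x) 0 0 * (w *m y) 0 0.
Proof. by rewrite !mulmxA -trmx_mul -mulmxA mxE big_ord1 mxE. Qed.

Lemma row_mulmx_entry (R : ringType) (p q : nat) (P : 'M[R]_(p, q)) (x : 'cV[R]_q) j :
  (row j P *m x) 0 0 = (P *m x) j 0.
Proof. by rewrite -row_mul mxE. Qed.

Lemma mulmxZ_entry (R : comRingType) (p q : nat) (P : 'M[R]_(p, q)) (x : 'cV[R]_q)
    (c : R) e :
  (P *m (c *: x)) e 0 = c * (P *m x) e 0.
Proof. by rewrite -scalemxAr mxE. Qed.

Lemma mulmxDZ_entry (R : comRingType) (p q : nat) (P : 'M[R]_(p, q))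
    (x y : 'cV[R]_q) (c : R) e :
  (P *m (x + c *: y)) e 0 = (P *m x) e 0 + c * (P *m y) e 0.
Proof. by rewrite mulmxDr mxE mulmxZ_entry. Qed.

Section OPF.
Variable R : realType.
Variables (n m : nat) (src dst : 'I_m -> 'I_n).
Local Notation V := (PTDF R src dst).
Local Notation feasible := (opf_feasible src dst).
Local Notation optimal := (opf_optimal src dst).

Lemma sumvD (x y : 'cV[R]_n) : sumv (x + y) = sumv x + sumv y.
Proof. by rewrite /sumv -big_split; apply: eq_bigr => i _; rewrite mxE. Qed.

Lemma sumvZ (c : R) (x : 'cV[R]_n) : sumv (c *: x) = c * sumv x.
Proof. by rewrite /sumv mulr_sumr; apply: eq_bigr => i _; rewrite mxE. Qed.

Lemma sumvN (x : 'cV[R]_n) : sumv (- x) = - sumv x.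
Proof. by rewrite -scaleN1r sumvZ mulN1r. Qed.

Lemma sumv_ge_coord (x : 'cV[R]_n) :
  (forall j, 0 <= x j 0) -> forall i, x i 0 <= sumv x.
Proof. by move=> x_ge0 i; rewrite /sumv (bigD1 i) //= lerDl sumr_ge0. Qed.

Lemma cost_ge0 (x : 'cV[R]_n) : 0 <= cost x.
Proof. by rewrite /cost mulr_ge0 ?sumr_ge0 // => [|i _]; [lra | exact: sqr_ge0]. Qed.

Lemma costDZ (x y : 'cV[R]_n) (c : R) :
  cost (x + c *: y) = cost x + c * \sum_i x i 0 * y i 0 + c ^+ 2 * cost y.
Proof.
by rewrite /cost !mulr_sumr -!big_split /=; apply: eq_bigr => i _; rewrite !mxE; field.
Qed.

Lemma cost_midpoint (x y : 'cV[R]_n) :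
  2^-1 * cost x + 2^-1 * cost y - cost (2^-1 *: x + 2^-1 *: y) =
  \sum_i 8^-1 * (x i 0 - y i 0) ^+ 2.
Proof.
rewrite /cost !mulrA !mulr_sumr -big_split -sumrB.
by apply: eq_bigr => i _ /=; rewrite !mxE; field.
Qed.

Section Existence.
Import classical_sets topology normedtype derive numFieldNormedType.Exports.
Local Open Scope classical_set_scope.

Lemma continuous_sum (T : topologicalType) (I : finType) (F : I -> T -> R) :
  (forall i, continuous (F i)) -> continuous (fun x => \sum_i F i x).
Proof. by move=> F_cont; apply: (@continuous_big R _ +%R 0 xpredT add_continuous). Qed.

Lemma continuous_trmx_coord i : continuous (fun v : 'rV[R]_n => v^T i 0).
Proof.
rewrite (_ : (fun v : 'rV[R]_n => v^T i 0) = fun v => v ord0 i).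
  exact: coord_continuous.
by apply/funext => v; rewrite mxE.
Qed.

Lemma closed_feasible (lam : R) (d : 'cV[R]_n) :
  closed [set v : 'rV[R]_n | feasible lam d v^T].
Proof.
have closed_forall (I : finType) (f : I -> 'rV[R]_n -> R) (D : I -> set R) :
    (forall i, continuous (f i)) -> (forall i, closed (D i)) ->
    closed [set v | forall i, D i (f i v)].
  move=> f_cont D_closed.
  rewrite (_ : [set v | _] = \bigcap_(i in setT) (f i @^-1` D i)).
    by apply: closed_bigI => i _; apply: preimage_closed.
  by apply/seteqP; split => [v fD i _ | v fD i]; [exact: fD | exact: fD].
apply: closedI; first by apply: (closed_forall _ _ (fun=> [set x | 0 <= x]));
  [exact: continuous_trmx_coord | move=> _; exact: closed_ge].
apply: closedI.
  have sum_cont : continuous (fun v : 'rV[R]_n => sumv v^T).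
    by apply: continuous_sum => i; exact: continuous_trmx_coord.
  change (closed ((fun v : 'rV[R]_n => sumv v^T) @^-1` [set x | x = sumv d])).
  by apply: preimage_closed => [v _|]; [exact: sum_cont | exact: closed_eq].
apply: (closed_forall _ (fun e v => (V *m (d - v^T)) e 0)
  (fun e => [set x | - (lam * `|(V *m d) e 0|) <= x <= lam * `|(V *m d) e 0|])).
  move=> e; rewrite (_ : (fun v => _) = fun v => \sum_j V e j * (d j 0 - v^T j 0)).
    apply: continuous_sum => j v.
    apply: (continuousM (s := fun=> V e j) (t := fun v => d j 0 - v^T j 0)).
      exact: cst_continuous.
    apply: (continuousB (f := fun=> d j 0) (g := fun v => v^T j 0)).
      exact: cst_continuous.
    exact: continuous_trmx_coord.
  by apply/funext => v; rewrite mxE; apply: eq_bigr => j _; rewrite !mxE.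
move=> e; rewrite (_ : [set x | _] = `[- (lam * `|(V *m d) e 0|), lam * `|(V *m d) e 0|]).
  by apply: interval_closed.
by apply/seteqP; split => x; rewrite /= in_itv.
Qed.

Lemma continuous_cost : continuous (fun v : 'rV[R]_n => cost v^T).
Proof.
move=> v; apply: (continuousM (s := fun=> 2^-1)); first exact: cst_continuous.
apply: continuous_sum => i u.
by apply: (continuousM (s := fun v : 'rV[R]_n => v^T i 0)); exact: continuous_trmx_coord.
Qed.

Lemma opf_optimal_exists (lam : R) (d : 'cV[R]_n) :
  0 <= lam -> (forall i, 0 <= d i 0) -> exists g, optimal lam d g.
Proof.
move=> lam_ge0 d_ge0.
set K := [set v : 'rV[R]_n | feasible lam d v^T].
have K_neq0 : K !=set0.
  exists d^T; rewrite /K /= trmxK; do 2!split=> //; move=> e.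
  by rewrite subrr mulmx0 !mxE oppr_le0 andbb mulr_ge0.
have K_compact : compact K.
  apply: (subclosed_compact (@closed_feasible lam d)
    (rV_compact (A := fun=> `[0, sumv d]) (fun=> @segment_compact R 0 (sumv d)))).
  move=> v [v_ge0 [v_sum _]] i /=; rewrite in_itv /= -v_sum.
  by have := sumv_ge_coord v_ge0 i; have := v_ge0 i; rewrite !mxE => -> ->.
have [c cK c_min] :=
  compact_EVT_min K_neq0 K_compact (continuous_subspaceT continuous_cost).
exists c^T; split; first by move: cK; rewrite inE.
by move=> h h_feas; rewrite -[h]trmxK c_min // inE /K /= trmxK.
Qed.

End Existence.

Lemma feasible_midpoint (lam : R) (d g1 g2 : 'cV[R]_n) :
  feasible lam d g1 -> feasible lam d g2 -> feasible lam d (2^-1 *: g1 + 2^-1 *: g2).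
Proof.
move=> [g1_ge0 [g1_sum g1_line]] [g2_ge0 [g2_sum g2_line]]; split.
  by move=> i; rewrite !mxE; have := g1_ge0 i; have := g2_ge0 i; lra.
split; first by rewrite sumvD !sumvZ g1_sum g2_sum; lra.
move=> e; have -> : (V *m (d - (2^-1 *: g1 + 2^-1 *: g2))) e 0 =
    2^-1 * (V *m (d - g1)) e 0 + 2^-1 * (V *m (d - g2)) e 0.
  by rewrite !mxE !mulr_sumr -big_split; apply: eq_bigr => i _ /=; rewrite !mxE; field.
by move: (g1_line e) (g2_line e) => /andP[? ?] /andP[? ?]; apply/andP; split; lra.
Qed.

Lemma opf_optimal_unique (lam : R) (d g1 g2 : 'cV[R]_n) :
  optimal lam d g1 -> optimal lam d g2 -> g1 = g2.
Proof.
move=> [g1_feas g1_min] [g2_feas g2_min].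
have le1mid := g1_min _ (feasible_midpoint g1_feas g2_feas).
have le12 := g1_min _ g2_feas; have le21 := g2_min _ g1_feas.
have sq_ge0 i : 0 <= 8^-1 * (g1 i 0 - g2 i 0) ^+ 2 by rewrite mulr_ge0 ?sqr_ge0 ?invr_ge0.
have sum0 : \sum_i 8^-1 * (g1 i 0 - g2 i 0) ^+ 2 = 0.
  apply/le_anti; rewrite sumr_ge0 // andbT -cost_midpoint; lra.
apply/matrixP => i j; rewrite ord1; apply/eqP; rewrite -subr_eq0.
have /eqP := psumr_eq0P (fun i _ => sq_ge0 i) sum0 isT (i := i).
by rewrite mulf_eq0 invr_eq0 pnatr_eq0 /= sqrf_eq0.
Qed.

Lemma gstar_opt (lam : R) (d g : 'cV[R]_n) : optimal lam d g -> gstar src dst lam d = g.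
Proof.
move=> g_opt; rewrite /gstar; case: pselect => [ex|]; last by case; exists g.
exact: opf_optimal_unique (projT2 (cid ex)) g_opt.
Qed.

Lemma gstar_optimal (lam : R) (d : 'cV[R]_n) :
  0 <= lam -> (forall i, 0 <= d i 0) -> optimal lam d (gstar src dst lam d).
Proof.
by move=> lam_ge0 /(opf_optimal_exists lam_ge0) [g g_opt]; rewrite (gstar_opt g_opt).
Qed.

Lemma feasible_lim (lam e0 : R) (d0 dg a b : 'cV[R]_n) : 0 <= lam -> 0 < e0 ->
  (forall eps, 0 < eps < e0 -> feasible lam (d0 + eps *: dg) (a + eps *: b)) ->
  feasible lam d0 a.
Proof.
move=> lam_ge0 e0_gt0 feas; split; [|split].
- move=> i; rewrite -oppr_le0; apply: (le0_of_le_mul_small (w := b i 0) e0_gt0).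
  by move=> eps /feas [/(_ i) + _]; rewrite !mxE; lra.
- apply/eqP; rewrite -subr_eq0 eq_le; apply/andP; split.
    apply: (le0_of_le_mul_small (w := sumv dg - sumv b) e0_gt0).
    by move=> eps /feas [_ [+ _]]; rewrite !sumvD !sumvZ; lra.
  rewrite -oppr_le0 opprB; apply: (le0_of_le_mul_small (w := sumv b - sumv dg) e0_gt0).
  by move=> eps /feas [_ [+ _]]; rewrite !sumvD !sumvZ; lra.
move=> e.
have line_eps eps : 0 < eps < e0 ->
    - (lam * `|(V *m d0) e 0 + eps * (V *m dg) e 0|)
    <= (V *m (d0 - a)) e 0 + eps * (V *m (dg - b)) e 0
    <= lam * `|(V *m d0) e 0 + eps * (V *m dg) e 0|.
  move=> /feas [_ [_ /(_ e)]]; rewrite mulmxDZ_entry.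
  by rewrite opprD addrACA -scalerBr mulmxDZ_entry.
have normD eps : 0 < eps -> lam * `|(V *m d0) e 0 + eps * (V *m dg) e 0|
    <= lam * `|(V *m d0) e 0| + eps * (lam * `|(V *m dg) e 0|).
  move=> eps_gt0; rewrite mulrCA -mulrDr ler_wpM2l // (le_trans (ler_normD _ _)) //.
  by rewrite normrM gtr0_norm.
apply/andP; split; rewrite -subr_le0.
  apply: (le0_of_le_mul_small (w := lam * `|(V *m dg) e 0| + (V *m (dg - b)) e 0) e0_gt0).
  move=> eps eps_range; have := normD eps; have := line_eps eps eps_range.
  by case/andP: eps_range => eps_gt0 _ /andP[+ _] /(_ eps_gt0); lra.
apply: (le0_of_le_mul_small (w := lam * `|(V *m dg) e 0| - (V *m (dg - b)) e 0) e0_gt0).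
move=> eps eps_range; have := normD eps; have := line_eps eps eps_range.
by case/andP: eps_range => eps_gt0 _ /andP[_ +] /(_ eps_gt0); lra.
Qed.

Lemma feasible_perturb (lam K eps : R) (d0 dg h : 'cV[R]_n) :
  0 <= lam -> (forall i, 0 <= d0 i 0) -> (forall i, 0 <= dg i 0) ->
  (forall e, (V *m d0) e 0 != 0 -> `|(V *m dg) e 0| <= K * `|(V *m d0) e 0|) ->
  0 <= K -> 0 <= eps -> eps * K <= 1 -> feasible lam d0 h ->
  feasible lam (d0 + eps *: dg) (h + eps *: (K *: (d0 - h) + dg)).
Proof.
move=> lam_ge0 d0_ge0 dg_ge0 K_bound K_ge0 eps_ge0 epsK_le1 [h_ge0 [h_sum h_line]].
have epsK_ge0 : 0 <= eps * K by rewrite mulr_ge0.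
have c_ge0 : 0 <= 1 - eps * K by rewrite subr_ge0.
split; [|split].
- move=> i; rewrite !mxE.
  have := mulr_ge0 c_ge0 (h_ge0 i).
  have := mulr_ge0 epsK_ge0 (d0_ge0 i); have := mulr_ge0 eps_ge0 (dg_ge0 i).
  lra.
- by rewrite !(sumvD, sumvZ, sumvN) h_sum; ring.
move=> e.
have -> : d0 + eps *: dg - (h + eps *: (K *: (d0 - h) + dg)) = (1 - eps * K) *: (d0 - h).
  by apply/matrixP => i j; rewrite !mxE; ring.
rewrite mulmxZ_entry mulmxDZ_entry.
have /andP[x_lo x_hi] := h_line e.
have [p0 | p_neq0] := eqVneq ((V *m d0) e 0) 0.
  have -> : (V *m (d0 - h)) e 0 = 0.
    by apply/le_anti; move: x_lo x_hi; rewrite p0 normr0; lra.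
  by rewrite mulr0 oppr_le0 andbb mulr_ge0.
have p_scaled : (1 - eps * K) * `|(V *m d0) e 0|
    <= `|(V *m d0) e 0 + eps * (V *m dg) e 0|.
  apply: le_trans (lerB_normD _ _); rewrite normrM ger0_norm // mulrBl mul1r lerB //.
  by rewrite -mulrA ler_wpM2l // K_bound.
have := ler_wpM2l lam_ge0 p_scaled.
have := ler_wpM2l c_ge0 x_hi; have := ler_wpM2l c_ge0 x_lo.
by rewrite !mulrN; lra.
Qed.

Lemma optimal_lim (lam e0 : R) (d0 dg a b : 'cV[R]_n) : 0 <= lam -> 0 < e0 ->
  (forall i, 0 <= d0 i 0) -> (forall i, 0 <= dg i 0) ->
  (forall eps, 0 < eps < e0 -> optimal lam (d0 + eps *: dg) (a + eps *: b)) ->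
  optimal lam d0 a.
Proof.
move=> lam_ge0 e0_gt0 d0_ge0 dg_ge0 opt.
split; first by apply: (feasible_lim (dg := dg) (b := b) lam_ge0 e0_gt0) => eps /opt [].
move=> h h_feas.
have [K K_ge0 K_bound] := exists_ratio_bound (V *m d0) (V *m dg).
set w := K *: (d0 - h) + dg.
pose eps1 := Num.min e0 (K + 1)^-1.
have eps1_gt0 : 0 < eps1 by rewrite lt_min e0_gt0 invr_gt0 ltr_wpDl.
rewrite -subr_le0.
apply: (le0_of_le_mul_small
  (w := \sum_i h i 0 * w i 0 - \sum_i a i 0 * b i 0 + e0 * cost w) eps1_gt0).
move=> eps /andP[eps_gt0]; rewrite lt_min => /andP[eps_lt_e0 eps_lt_inv].
have epsK_le1 : eps * K <= 1.
  have : eps * (K + 1) < 1 by rewrite -ltr_pdivlMr ?div1r // ltr_wpDl.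
  have := ltW eps_gt0; nra.
have h_eps_feas := feasible_perturb lam_ge0 d0_ge0 dg_ge0 K_bound K_ge0
  (ltW eps_gt0) epsK_le1 h_feas.
have := (opt eps _).2 _ h_eps_feas; rewrite eps_gt0 eps_lt_e0 => /(_ isT).
rewrite !costDZ -/w.
have := mulr_ge0 (sqr_ge0 eps) (cost_ge0 b).
have : eps ^+ 2 * cost w <= eps * (e0 * cost w).
  by rewrite expr2 -mulrA ler_wpM2l ?(ltW eps_gt0) // ler_wpM2r ?cost_ge0 ?(ltW eps_lt_e0).
lra.
Qed.

Lemma psi_eq_of_skew (lam lamstar : R) (E' : {set 'I_m}) (A : 'M[R]_n)
    (d : 'cV[R]_n) j k :
  gstar src dst lam d = A *m d ->
  let M := Qmat src dst lam E' d j k *m (A - 1%:M) in M^T = - M ->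
  limits src dst lamstar d j 0 != 0 -> limits src dst lamstar d k 0 != 0 ->
  psi src dst lam lamstar E' d j = psi src dst lam lamstar E' d k.
Proof.
move=> gd M /(skew_quad_form0 d); rewrite /M /psi /limits /flow gd.
rewrite ![(lamstar *: _ : 'cV[R]_m) _ 0]mxE.
set y := d - A *m d; set f := PTDF_on R src dst E' *m y.
set aj := (V *m d) j 0; set ak := (V *m d) k 0.
rewrite !mulmxA -[_ *m (A - 1%:M) *m d]mulmxA /Qmat /flow gd -/y -/f.
rewrite (mulmxBl A) mul1mx -(opprB d) -/y mulmxN [(- _ : 'M_1) 0 0]mxE.
move=> /eqP; rewrite oppr_eq0 => /eqP quad0 lj lk.
have aj_neq0 : aj != 0 by apply: contraNneq lj => ->; rewrite mulr0.
have ak_neq0 : ak != 0 by apply: contraNneq lk => ->; rewrite mulr0.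
apply/eqP; rewrite eqr_div // mulrCA [X in _ == X]mulrCA.
rewrite (@normr_cross_eq _ (f j 0) (f k 0) aj ak) //.
have quad (u w : 'rV[R]_n) :
    (d^T *m (u^T *m w) *m y) 0 0 = (u *m d) 0 0 * (w *m y) 0 0.
  exact: rank1_quad_form.
move: quad0; case: ifP => _.
  rewrite (mulmxBr d^T) mulmxBl [(_ - _ : 'M_1) 0 0]mxE [(- _ : 'M_1) 0 0]mxE.
  by rewrite !quad !row_mulmx_entry -/f -/aj -/ak; lra.
rewrite (mulmxDr d^T) mulmxDl [(_ + _ : 'M_1) 0 0]mxE.
by rewrite !quad !row_mulmx_entry -/f -/aj -/ak; lra.
Qed.

End OPF.

Theorem mainTheorem12 (R : realType) (n m : nat) (hn : (0 < n)%N)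
    (src dst : 'I_m -> 'I_n) (lam lamstar : R) (I1 I2 : {set 'I_m})
    (E' : {set 'I_m}) (j k : 'I_m) (gam : 'cV[R]_n) :
  simple_graph src dst ->
  connected_on src dst setT ->
  0 < lam < 1 -> lam <= lamstar ->
  connected_on src dst E' ->
  j \in E' -> k \in E' ->
  in_GammaA src dst lam (Ordinal hn) (Amat src dst lam I1 I2) gam ->
  exists eps0 : R, 0 < eps0 /\
    forall eps : R, 0 <= eps <= eps0 ->
      let d := unitv R (Ordinal hn) + eps *: gam in
      let M := Qmat src dst lam E' d j k *m (Amat src dst lam I1 I2 - 1%:M) in
      M^T = - M ->
      limits src dst lamstar d j 0 != 0 ->
      limits src dst lamstar d k 0 != 0 ->
      psi src dst lam lamstar E' d j = psi src dst lam lamstar E' d k.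
Proof.
move=> _ _ /andP[/ltW lam_ge0 _] _ _ _ _ [[_ [gam_ge0 _]] [e0 [e0_gt0 gA]]].
set A := Amat src dst lam I1 I2; set e1 := unitv R (Ordinal hn).
have e1_ge0 i : 0 <= e1 i 0 by rewrite mxE ler0n.
have optA eps : 0 < eps < e0 ->
    opf_optimal src dst lam (e1 + eps *: gam) (A *m e1 + eps *: (A *m gam)).
  move=> eps_range; rewrite scalemxAr -mulmxDr -gA //.
  apply: gstar_optimal lam_ge0 _ => i; case/andP: eps_range => eps_gt0 _.
  by rewrite mxE addr_ge0 ?e1_ge0 // mxE mulr_ge0 ?gam_ge0 ?ltW.
have optA0 := optimal_lim lam_ge0 e0_gt0 e1_ge0 gam_ge0 optA.
exists (e0 / 2); split => [|eps /andP[eps_ge0 eps_le] d M]; first lra.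
apply: psi_eq_of_skew.
have [eps0 | eps_neq0] := eqVneq eps 0.
  by rewrite /d eps0 scale0r addr0 (gstar_opt optA0).
by apply: gA; rewrite lt_neqAle eq_sym eps_neq0 eps_ge0 /=; lra.
Qed.
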